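(* There is a constant $c>0$ such that for every integer $m\ge 1$ there exist two NFAs, each with $m+1$ states, over an alphabet of cardinality $2m$, such that there is a tower of height at least $c\cdot 2^{2m}$ between their languages and there is no infinite tower between their languages.
   Context: For strings $v=a_1\cdots a_k$ and $w$, $v\preccurlyeq w$ if $w\in\Sigma^*a_1\Sigma^*a_2\Sigma^*\cdots\Sigma^*a_k\Sigma^*$. A sequence $(w_i)_{i=1}^r$ of strings is a tower between languages $K$ and $L$ if $w_1\in K\cup L$ and for all $i=1,\dots,r-1$: $w_i\preccurlyeq w_{i+1}$, $w_i\in K$ implies $w_{i+1}\in L$, and $w_i\in L$ implies $w_{i+1}\in K$; $r$ is its height. An infinite tower is an infinite sequence with the same properties. *)

From mathcomp Require Import all_boot.
From Stdlib Require Import Reals.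

Set Implicit Arguments.
Unset Strict Implicit.
Unset Printing Implicit Defensive.

Record nfa (n k : nat) := NFA {
  nfa_init  : {set 'I_n};
  nfa_final : {set 'I_n};
  nfa_trans : 'I_n -> 'I_k -> {set 'I_n}
}.

Definition nfa_step n k (A : nfa n k) (S : {set 'I_n}) (a : 'I_k) : {set 'I_n} :=
  \bigcup_(q in S) nfa_trans A q a.

Definition nfa_reach n k (A : nfa n k) (S : {set 'I_n}) (w : seq 'I_k) : {set 'I_n} :=
  foldl (nfa_step A) S w.

Definition nfa_lang n k (A : nfa n k) : pred (seq 'I_k) :=
  fun w => nfa_reach A (nfa_init A) w :&: nfa_final A != set0.

Definition subword (T : eqType) (v w : seq T) : bool := subseq v w.

Definition is_tower (T : eqType) (K L : pred (seq T)) (ws : seq (seq T)) : Prop :=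
  0 < size ws /\
  (K (nth [::] ws 0) || L (nth [::] ws 0)) /\
  (forall i, i.+1 < size ws ->
     [/\ subword (nth [::] ws i) (nth [::] ws i.+1),
         K (nth [::] ws i) -> L (nth [::] ws i.+1) &
         L (nth [::] ws i) -> K (nth [::] ws i.+1)]).

Definition is_infinite_tower (T : eqType) (K L : pred (seq T)) (w : nat -> seq T) : Prop :=
  (K (w 0) || L (w 0)) /\
  (forall i, [/\ subword (w i) (w i.+1),
                 K (w i) -> L (w i.+1) &
                 L (w i) -> K (w i.+1)]).

(* Write m = p + 1 and call the letters >= p high.  The tower consists of the
   prefixes of the Zimin word 0 1 0 2 0 1 0 3 ... over the letters < 2p, of
   lengths 0, 1, ..., 4^p - 1; K accepts the even and L the odd ones.

   Every word of K has strictly decreasing right-to-left maxima among its high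
   letters, and the suffix after its last high letter does not end in 0.  Every
   word of L has a low suffix ending in 0 whose right-to-left maxima strictly
   decrease.  Right-to-left maxima grow lexicographically along subsequences,
   and strictly decreasing sequences of letters are binary numerals, so along
   an infinite tower the maxima of the high letters eventually stabilise.  From
   then on the low suffixes form a subsequence chain, and passing from an
   L-word through a K-word to the next L-word inserts a nonzero letter after a
   final 0, which makes the maxima of the low suffix grow strictly: impossible
   infinitely often. *)

From mathcomp Require Import all_boot all_order zify.

Set Implicit Arguments.
Unset Strict Implicit.
Unset Printing Implicit Defensive.

Import Order.TTheory.

Local Notation "a <=lex b" := ((a : seqlexi nat) <= (b : seqlexi nat))%O
  (at level 70, no associativity).
Local Notation "a <lex b" := ((a : seqlexi nat) < (b : seqlexi nat))%O
  (at level 70, no associativity).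

Lemma lexi_consE (x y : nat) a b :
  (x :: a <=lex y :: b) = (x < y) || (x == y) && (a <=lex b).
Proof. by rewrite lexi_cons !leEnat; case: ltngtP. Qed.

Lemma ltxi_consE (x y : nat) a b :
  (x :: a <lex y :: b) = (x < y) || (x == y) && (a <lex b).
Proof. by rewrite ltxi_cons leEnat; case: ltngtP. Qed.

Definition maxs (s : seq nat) := \max_(x <- s) x.

Lemma maxs_nil : maxs [::] = 0.
Proof. exact: big_nil. Qed.

Lemma maxs_cons x s : maxs (x :: s) = maxn x (maxs s).
Proof. exact: big_cons. Qed.

Lemma maxs_rcons s x : maxs (rcons s x) = maxn (maxs s) x.
Proof. by rewrite /maxs -cats1 big_cat big_seq1. Qed.

Lemma leq_maxs x s : x \in s -> x <= maxs s.
Proof. by move=> xs; apply: leq_bigmax_seq. Qed.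

Lemma maxs_lt B s : s != [::] -> all (gtn B) s -> maxs s < B.
Proof.
elim: s => [|x s IH] //= _ /andP[lt_x lt_s]; rewrite maxs_cons gtn_max lt_x.
by case: s IH lt_s => [|y s] IH lt_s; [rewrite maxs_nil (leq_ltn_trans _ lt_x) | exact: IH].
Qed.

Lemma maxs_subseq u w : subseq u w -> maxs u <= maxs w.
Proof. by move=> uw; apply/bigmax_leqP_seq => x /(mem_subseq uw) /leq_maxs. Qed.

Fixpoint rl_maxima (s : seq nat) : seq nat :=
  if s is x :: s' then
    if maxs s' <= x then x :: rl_maxima s' else rl_maxima s'
  else [::].

Lemma rl_maxima_eq0 s : (rl_maxima s == [::]) = (s == [::]).
Proof.
elim: s => [|x s IH] //=; case: ifP => // lt_x; apply/eqP => rls0.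
by move: IH lt_x; rewrite rls0 eqxx => /esym/eqP ->; rewrite maxs_nil.
Qed.

Lemma rl_maxima_head s : s != [::] -> exists l, rl_maxima s = maxs s :: l.
Proof.
elim: s => [|x s IH] //= _; rewrite maxs_cons; case: leqP => [_|lt_xs].
  by exists (rl_maxima s).
have /IH[l ->] : s != [::] by case: s lt_xs {IH} => //; rewrite maxs_nil.
by exists l.
Qed.

Lemma rl_maxima_subseq s : subseq (rl_maxima s) s.
Proof.
elim: s => [|x s IH] //=; case: ifP => _; first by rewrite eqxx.
exact: subseq_trans IH (subseq_cons _ _).
Qed.

Lemma lex_cons_upper x l : (forall y, y \in l -> y <= x) -> l <=lex x :: l.
Proof.
elim: l x => [|y l IH] x ub_x //; rewrite lexi_consE.
move: (ub_x y (mem_head y l)); rewrite leq_eqVlt => /orP[/eqP->|->] //.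
rewrite ltnn eqxx /=; apply: IH => z zl.
by apply: ub_x; rewrite inE zl orbT.
Qed.

Lemma rl_maxima_cons_lex x s : rl_maxima s <=lex rl_maxima (x :: s).
Proof.
rewrite [rl_maxima (x :: s)]/=; case: ifP => le_sx //.
apply: lex_cons_upper => y /(mem_subseq (rl_maxima_subseq s)) /leq_maxs le_ys.
exact: leq_trans le_ys le_sx.
Qed.

Lemma rl_maxima_lex u w : subseq u w -> rl_maxima u <=lex rl_maxima w.
Proof.
elim: w u => [|x w IH] [|y u] //; rewrite [subseq _ _]/=.
case: eqP => [<-|_] uw; last exact: le_trans (IH _ uw) (rl_maxima_cons_lex x w).
have le_uw := maxs_subseq uw; rewrite /=.
case: (leqP (maxs w) y) => [le_wy|lt_yw].
  by rewrite (leq_trans le_uw le_wy) lexi_consE ltnn eqxx IH.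
case: leqP => _; last exact: IH.
have /rl_maxima_head[l ->] : w != [::].
  by case: w lt_yw {IH uw le_uw} => //; rewrite maxs_nil.
by rewrite lexi_consE lt_yw.
Qed.

Lemma rl_maxima_rcons_lt z x a :
  x < a -> rl_maxima (rcons z x) <lex rl_maxima (rcons (rcons z x) a).
Proof.
move=> lt_xa; elim: z => [|y z IH].
  by rewrite /= maxs_cons !maxs_nil maxn0 [a <= x]leqNgt lt_xa /= ltxi_consE lt_xa.
rewrite /= [maxs (rcons (rcons _ _) _)]maxs_rcons geq_max.
case: (leqP (maxs (rcons z x)) y) => [le_zy|_] /=; last exact: IH.
case: (leqP a y) => [_|lt_ya]; first by rewrite ltxi_consE ltnn eqxx IH orbT.
have /rl_maxima_head[l ->] : rcons (rcons z x) a != [::] by rewrite -size_eq0 size_rcons.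
by rewrite maxs_rcons (maxn_idPr (ltnW (leq_ltn_trans le_zy lt_ya))) ltxi_consE lt_ya.
Qed.

Lemma rl_maxima_cons_eq x u w : maxs u <= maxs w ->
  rl_maxima (x :: u) = rl_maxima (x :: w) -> rl_maxima u = rl_maxima w.
Proof.
move=> le_uw /=; case: (leqP (maxs w) x) => [le_wx|lt_xw].
  by rewrite (leq_trans le_uw le_wx) => -[].
have /rl_maxima_head[l ->] : w != [::] by case: w lt_xw {le_uw} => //; rewrite maxs_nil.
case: leqP => // _ [eq_xw]; by move: lt_xw; rewrite -eq_xw ltnn.
Qed.

(* On strictly decreasing sequences [bits] is a binary numeral, hence strictly
   monotone for the lexicographic order. *)
Definition bits (l : seq nat) := \sum_(x <- l) 2 ^ x.

Lemma bits_nil : bits [::] = 0.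
Proof. exact: big_nil. Qed.

Lemma bits_cons x l : bits (x :: l) = 2 ^ x + bits l.
Proof. exact: big_cons. Qed.

Lemma bits_lt_pow2 b l : sorted gtn (b :: l) -> bits l < 2 ^ b.
Proof.
elim: l b => [|x l IH] b /=; first by rewrite bits_nil expn_gt0.
case/andP=> lt_xb /IH lt_lx; rewrite bits_cons.
apply: (@leq_trans (2 ^ x + 2 ^ x)); first by rewrite ltn_add2l.
by rewrite addnn -mul2n -expnS leq_exp2l.
Qed.

Lemma bits_lt_lex a b : sorted gtn a -> sorted gtn b -> a <lex b -> bits a < bits b.
Proof.
elim: a b => [|x a IH] [|y b] //.
  by rewrite bits_nil bits_cons ltn_addr ?expn_gt0.
move=> /= sorted_a sorted_b; rewrite ltxi_consE => /orP[lt_xy|/andP[/eqP<- lt_ab]].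
  apply: (@leq_trans (2 ^ x.+1)); first by rewrite bits_lt_pow2 //= ltnSn.
  by rewrite bits_cons (leq_trans _ (leq_addr _ _)) // leq_exp2l.
by rewrite !bits_cons ltn_add2l IH // (path_sorted sorted_a, path_sorted sorted_b).
Qed.

Lemma bits_le_lex a b : sorted gtn a -> sorted gtn b -> a <=lex b -> bits a <= bits b.
Proof.
by move=> sa sb; rewrite le_eqVlt => /orP[/eqP->|/(bits_lt_lex sa sb)/ltnW].
Qed.

Lemma bounded_climb_impossible (f g : nat -> nat) B :
  (forall k, f k <= f k.+1) -> (forall k, f k < B) -> (forall k, g k < B) ->
  (forall k, f k = f k.+2 -> g k < g k.+1) -> False.
Proof.
move=> f_mono f_bnd g_bnd g_climbs.
pose phi k := (f k + f k.+1) * B + g k.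
have phi_incr k : phi k < phi k.+1.
  have := f_mono k; have := f_mono k.+1; have := g_bnd k; rewrite /phi.
  case: (eqVneq (f k) (f k.+2)) => [/[dup] /g_climbs|]; nia.
have phi_ge k : k <= phi k.
  by elim: k => // k IH; apply: leq_ltn_trans IH (phi_incr k).
have := phi_ge ((B + B) * B + B); rewrite leqNgt /phi.
have := f_bnd ((B + B) * B + B); have := f_bnd ((B + B) * B + B).+1.
have := g_bnd ((B + B) * B + B); nia.
Qed.

Section LowSuffix.
Variable p : nat.

Definition high (s : seq nat) := filter (leq p) s.

(* The suffix after the last high letter, or the whole word if it has none. *)
Fixpoint low_suffix (s : seq nat) : seq nat :=
  if s is x :: s' then
    if has (leq p) s' then low_suffix s' else if p <= x then s' else s
  else [::].

Lemma high_eq0 s : (high s == [::]) = ~~ has (leq p) s.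
Proof. by rewrite has_filter negbK. Qed.

Lemma high_lows s : all (gtn p) s -> high s = [::].
Proof.
by move=> lows; apply/eqP; rewrite high_eq0; apply/hasPn => x /(allP lows); rewrite /= -ltnNge.
Qed.

Lemma has_high_lows s : all (gtn p) s -> has (leq p) s = false.
Proof. by move=> /high_lows /eqP; rewrite high_eq0 => /negbTE. Qed.

Lemma high_subseq u w : subseq u w -> subseq (high u) (high w).
Proof.
by move=> uw; rewrite subseq_filter filter_all (subseq_trans (filter_subseq _ _) uw).
Qed.

Lemma low_suffix_id s : ~~ has (leq p) s -> low_suffix s = s.
Proof.
by elim: s => [|x s IH] //=; rewrite negb_or => /andP[/negbTE-> /[dup] /IH-> /negbTE->].
Qed.

Lemma low_suffix_subseq s : subseq (low_suffix s) s.
Proof.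
elim: s => [|x s IH] //; rewrite [low_suffix _]/=.
case: ifP => _; first exact: subseq_trans IH (subseq_cons _ _).
by case: ifP => _; [exact: subseq_cons | exact: subseq_refl].
Qed.

Lemma low_suffix_cons_subseq x s : subseq (low_suffix s) (low_suffix (x :: s)).
Proof.
rewrite [low_suffix (x :: s)]/=.
case: ifP => [_|/negbT/low_suffix_id->]; first exact: subseq_refl.
by case: ifP => _; [exact: subseq_refl | exact: subseq_cons].
Qed.

Lemma has_high_rl_maxima u w :
  rl_maxima (high u) = rl_maxima (high w) -> has (leq p) u = has (leq p) w.
Proof.
move=> eq_uw; apply: negb_inj.
by rewrite -!high_eq0 -[high u == _]rl_maxima_eq0 -[high w == _]rl_maxima_eq0 eq_uw.
Qed.

Lemma high_rl_maxima_cons_eq x u w : subseq u w ->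
  rl_maxima (high (x :: u)) = rl_maxima (high (x :: w)) ->
  rl_maxima (high u) = rl_maxima (high w).
Proof.
rewrite /high /=; case: ifP => // _ uw.
exact/rl_maxima_cons_eq/maxs_subseq/high_subseq.
Qed.

Lemma low_suffix_mono u w : subseq u w ->
  rl_maxima (high u) = rl_maxima (high w) -> subseq (low_suffix u) (low_suffix w).
Proof.
elim: w u => [|x w IH] [|y u] //; first by move=> *; apply: sub0seq.
move=> uw eq_uw; case: (eqVneq y x) => [eq_yx|ne_yx].
  subst y; rewrite /= eqxx in uw.
  have eq_uw' := high_rl_maxima_cons_eq uw eq_uw.
  rewrite /= -(has_high_rl_maxima eq_uw'); case: ifP => _; first exact: IH.
  by case: ifP => _ //=; rewrite eqxx.
rewrite /= (negbTE ne_yx) in uw.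
have eq_yuw : rl_maxima (high (y :: u)) = rl_maxima (high w).
  apply: (@le_anti _ (seqlexi nat)); rewrite rl_maxima_lex ?high_subseq //=.
  by rewrite eq_uw rl_maxima_lex ?high_subseq ?subseq_cons.
exact: subseq_trans (IH _ uw eq_yuw) (low_suffix_cons_subseq x w).
Qed.

End LowSuffix.

Lemma all_subseq (T : eqType) (a : pred T) u w : subseq u w -> all a w -> all a u.
Proof. by move=> uw /allP aw; apply/allP => x /(mem_subseq uw) /aw. Qed.

Lemma sorted_gtn_bound B l : sorted gtn l -> all (gtn B) l -> sorted gtn (B :: l).
Proof. by case: l => //= x l -> /andP[->]. Qed.

Lemma subseq_rcons_neq (T : eqType) (z y : seq T) c a :
  subseq (rcons z c) (rcons y a) -> c != a -> subseq (rcons z c) y.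
Proof.
rewrite -subseq_rev !rev_rcons /= => zy /negbTE ne_ca.
by move: zy; rewrite ne_ca -rev_rcons subseq_rev.
Qed.

Definition ends_in_zero (s : seq nat) := last 1 s == 0.

Lemma ends_in_zero_cons a s : s != [::] -> ends_in_zero (a :: s) = ends_in_zero s.
Proof. by case: s. Qed.

Lemma ends_in_zero_neq0 s : ends_in_zero s -> s != [::].
Proof. by case: s. Qed.

Lemma rl_maxima_round_lt z y z' :
  subseq z y -> subseq y z' -> ends_in_zero z -> ~~ ends_in_zero y ->
  rl_maxima z <lex rl_maxima z'.
Proof.
case/lastP: y => [|y c]; first by rewrite subseq0 => /eqP->.
case/lastP: z => [|z d] // zy yz'; rewrite /ends_in_zero !last_rcons => /eqP d0 c0.
subst d; have c_gt0 : 0 < c by rewrite lt0n.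
have zc_yc : subseq (rcons (rcons z 0) c) (rcons y c).
  by rewrite -!cats1 subseq_cat2r cats1 (subseq_rcons_neq zy) // eq_sym.
exact: lt_le_trans (rl_maxima_rcons_lt z c_gt0) (rl_maxima_lex (subseq_trans zc_yc yz')).
Qed.

Definition K_shaped p B s :=
  [&& sorted gtn (rl_maxima (high p s)), ~~ ends_in_zero (low_suffix p s) & all (gtn B) s].

Definition L_shaped p B s :=
  [&& ends_in_zero (low_suffix p s), sorted gtn (rl_maxima (low_suffix p s)) & all (gtn B) s].

Section AlternatingChain.
Variables (p B : nat) (W : nat -> seq nat).
Hypothesis W_chain : forall i, subseq (W i) (W i.+1).
Hypothesis W_K : forall k, K_shaped p B (W k.*2).
Hypothesis W_L : forall k, L_shaped p B (W k.*2.+1).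

Let top_max j := rl_maxima (high p (W j)).
Let low_max k := rl_maxima (low_suffix p (W k.*2.+1)).

Lemma chain_subseq i j : i <= j -> subseq (W i) (W j).
Proof. by apply: (@homo_leq _ _ (fun u v => subseq u v)) => //; apply: subseq_trans. Qed.

Lemma top_max_lex i j : i <= j -> top_max i <=lex top_max j.
Proof. by move=> le_ij; apply/rl_maxima_lex/high_subseq/chain_subseq. Qed.

Lemma top_max_sorted k : sorted gtn (top_max k.*2).
Proof. by case/and3P: (W_K k). Qed.

Lemma low_max_sorted k : sorted gtn (low_max k).
Proof. by case/and3P: (W_L k). Qed.

Lemma bits_top_max_lt k : bits (top_max k.*2) < 2 ^ B.
Proof.
apply/bits_lt_pow2/sorted_gtn_bound; first exact: top_max_sorted.
case/and3P: (W_K k) => _ _; apply: all_subseq.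
exact: subseq_trans (rl_maxima_subseq _) (filter_subseq _ _).
Qed.

Lemma bits_low_max_lt k : bits (low_max k) < 2 ^ B.
Proof.
apply/bits_lt_pow2/sorted_gtn_bound; first exact: low_max_sorted.
case/and3P: (W_L k) => _ _; apply: all_subseq.
exact: subseq_trans (rl_maxima_subseq _) (low_suffix_subseq _ _).
Qed.

Lemma top_max_stall k : bits (top_max k.*2) = bits (top_max k.+2.*2) ->
  forall j, k.*2 <= j <= k.+2.*2 -> top_max j = top_max k.+2.*2.
Proof.
move=> eq_bits j /andP[le_kj le_jk2].
have : top_max k.*2 <=lex top_max k.+2.*2 by apply: top_max_lex; lia.
rewrite le_eqVlt => /orP[/eqP eq_top|].
  by apply: (@le_anti _ (seqlexi nat)); rewrite top_max_lex //= -eq_top top_max_lex.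
by move/(bits_lt_lex (top_max_sorted k) (top_max_sorted k.+2)); rewrite eq_bits ltnn.
Qed.

Lemma low_max_climbs k :
  bits (top_max k.*2) = bits (top_max k.+2.*2) -> bits (low_max k) < bits (low_max k.+1).
Proof.
move=> /top_max_stall flat; apply: bits_lt_lex; rewrite ?low_max_sorted //.
have low_step j : k.*2 < j.+1 <= k.+2.*2 ->
    subseq (low_suffix p (W j)) (low_suffix p (W j.+1)).
  move=> range_j; apply: low_suffix_mono; first exact: W_chain.
  by rewrite -/(top_max j) -/(top_max j.+1) (flat j) ?(flat j.+1) //; lia.
apply: (@rl_maxima_round_lt _ (low_suffix p (W k.+1.*2))).
- by apply: low_step; lia.
- by apply: low_step; lia.
- by case/and3P: (W_L k).
- by case/and3P: (W_K k.+1).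
Qed.

Theorem no_alternating_chain : False.
Proof.
apply: (@bounded_climb_impossible (fun k => bits (top_max k.*2))
  (fun k => bits (low_max k)) (2 ^ B)).
- by move=> k; apply: bits_le_lex; rewrite ?top_max_sorted ?top_max_lex // leq_double.
- exact: bits_top_max_lt.
- exact: bits_low_max_lt.
- exact: low_max_climbs.
Qed.

End AlternatingChain.

Section StateMachine.
Variables (n : nat) (trans : nat -> nat -> nat -> bool) (final : nat -> bool).

Fixpoint accepts (q : nat) (s : seq nat) : bool :=
  if s is a :: s' then [exists q' : 'I_n, trans q a q' && accepts q' s'] else final q.

Definition nfa_of k (init : nat -> bool) : nfa n k :=
  NFA [set q : 'I_n | init q] [set q : 'I_n | final q]
      (fun q a => [set q' : 'I_n | trans q a q']).

Lemma nfa_of_reach k init (S : {set 'I_n}) (w : seq 'I_k) :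
  (nfa_reach (nfa_of k init) S w :&: nfa_final (nfa_of k init) != set0) =
  [exists q : 'I_n, (q \in S) && accepts q (map val w)].
Proof.
elim: w S => [|a w IH] S.
  apply/set0Pn/existsP => [[q]|[q /andP[Sq fq]]].
    by rewrite !inE => /andP[Sq fq]; exists q; rewrite Sq.
  by exists q; rewrite !inE Sq.
rewrite /nfa_reach /= -/(nfa_reach _ _ _) IH.
apply/existsP/existsP => [[q' /andP[/bigcupP[q Sq] tq acc]]|].
  by exists q; rewrite Sq /=; apply/existsP; exists q'; move: tq; rewrite inE => ->.
case=> q /andP[Sq /existsP[q' /andP[tq acc]]].
by exists q'; rewrite acc andbT; apply/bigcupP; exists q; rewrite ?inE.
Qed.

Lemma nfa_of_lang k init (w : seq 'I_k) :
  nfa_lang (nfa_of k init) w = [exists q : 'I_n, init q && accepts q (map val w)].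
Proof. by rewrite /nfa_lang nfa_of_reach; apply: eq_existsb => q; rewrite inE. Qed.

End StateMachine.

Definition final0 (q : nat) := q == 0.

Section AutomatonK.
Variable p : nat.

(* State 1 reads a nonempty low word not
   ending in 0; a state q >= 2 stands for the high letter q + p - 2: it reads
   smaller letters and leaves on that letter to a smaller state. *)
Definition transK (q a q' : nat) : bool :=
  if 2 <= q then (a < q + p - 2) && (q' == q) || (a == q + p - 2) && (q' < q)
  else [&& q == 1, a < p & (q' == 1) || (a != 0) && (q' == 0)].

Definition K_state (q : nat) (s : seq nat) : bool :=
  if q == 0 then s == [::]
  else if q == 1 then [&& s != [::], all (gtn p) s & ~~ ends_in_zero s]
  else [&& sorted gtn (rl_maxima (high p s)), maxs (high p s) == q + p - 2,
           has (leq p) s & ~~ ends_in_zero (low_suffix p s)].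

Lemma K_state_cons_stay q a s :
  2 <= q -> a < q + p - 2 -> K_state q s -> K_state q (a :: s).
Proof.
case: q => [|[|q]] // _ lt_a; rewrite /K_state /= => /and4P[sorted_s /eqP max_s has_s low_s].
rewrite has_s orbT low_s andbT; case: ifP => _ /=; last by rewrite sorted_s max_s eqxx.
by rewrite max_s leqNgt lt_a maxs_cons max_s sorted_s andbT; apply/eqP/maxn_idPr/ltnW.
Qed.

Lemma K_state_cons_top q q' s :
  2 <= q -> q' < q -> K_state q' s -> K_state q ((q + p - 2) :: s).
Proof.
case: q => [|[|q]] // _ lt_q'; set h := q.+2 + p - 2.
have p_le_h : p <= h by rewrite /h; lia.
rewrite {2}/K_state /= /high /= p_le_h /= -/(high p s) maxs_cons.
case: q' lt_q' => [|[|q']] lt_q'; rewrite /K_state /=.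
- by move=> /eqP->; rewrite /high /= maxs_nil leq0n maxn0 eqxx.
- case/and3P=> _ lows s_end; rewrite high_lows // has_high_lows // s_end.
  by rewrite maxs_nil /= maxn0 eqxx.
case/and4P=> sorted_s /eqP max_s has_s low_s; rewrite has_s low_s max_s.
have lt_max : q'.+2 + p - 2 <= h by rewrite /h; lia.
rewrite lt_max (maxn_idPl lt_max) eqxx !andbT /=.
have /rl_maxima_head[l eq_l] : high p s != [::] by rewrite high_eq0 has_s.
by move: sorted_s; rewrite eq_l max_s /= => ->; rewrite andbT; lia.
Qed.

Lemma K_state_cons_low a s :
  a < p -> K_state 1 s || (a != 0) && (s == [::]) -> K_state 1 (a :: s).
Proof.
rewrite /K_state /= => lt_ap /orP[/and3P[s0 lows ends]|/andP[a0 /eqP->]].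
  by rewrite lt_ap lows; case: s s0 ends {lows}.
by rewrite lt_ap /ends_in_zero /= a0.
Qed.

Lemma acceptsK_state q s : accepts p.+2 transK final0 q s -> K_state q s.
Proof.
elim: s q => [|a s IH] q /=; first by move=> /eqP->.
case/existsP=> q' /andP[tr /IH st]; rewrite /transK in tr.
case: (leqP 2 q) tr => [q_ge2|q_lt2] /=.
  case/orP=> [/andP[lt_a /eqP eq_q']|/andP[/eqP-> lt_q']].
    by rewrite eq_q' in st; apply: K_state_cons_stay.
  exact: K_state_cons_top st.
case/and3P=> /eqP-> lt_ap tr'; apply: K_state_cons_low => //.
case/orP: tr' => [/eqP eq_q'|/andP[-> /eqP eq_q']]; rewrite eq_q' in st.
  by rewrite st.
by rewrite /K_state /= in st; rewrite st orbT.
Qed.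

Lemma K_state_shape q s :
  K_state q s -> sorted gtn (rl_maxima (high p s)) && ~~ ends_in_zero (low_suffix p s).
Proof.
rewrite /K_state; case: q => [|[|q]] /=; first by move=> /eqP->.
  by case/and3P=> _ lows ends; rewrite high_lows // low_suffix_id ?has_high_lows.
by case/and4P=> -> _ _ ->.
Qed.

End AutomatonK.

Section AutomatonL.
Variable p : nat.

(* State 1 skips an arbitrary prefix and leaves on a high letter; a state
   q >= 2 stands for the low letter q - 2: it reads smaller letters and leaves
   on that letter to a smaller state >= 2, or, for the letter 0, to state 0. *)
Definition transL (q a q' : nat) : bool :=
  if 2 <= q then (a < q - 2) && (q' == q) ||
                 (a == q - 2) && (if q == 2 then q' == 0 else 2 <= q' < q)
  else (q == 1) && ((q' == 1) || (p <= a) && (2 <= q')).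

Definition L_state (q : nat) (s : seq nat) : bool :=
  if q == 0 then s == [::]
  else if q == 1 then [&& has (leq p) s, ends_in_zero (low_suffix p s)
                        & sorted gtn (rl_maxima (low_suffix p s))]
  else [&& all (gtn p) s, ends_in_zero s, sorted gtn (rl_maxima s) & maxs s == q - 2].

Lemma L_state_cons_loop a s : L_state 1 s -> L_state 1 (a :: s).
Proof. by rewrite /L_state /= => /and3P[has_s ends sorted_s]; rewrite has_s orbT ends. Qed.

Lemma L_state_cons_enter a q s :
  p <= a -> 2 <= q -> L_state q s -> L_state 1 (a :: s).
Proof.
case: q => [|[|q]] // p_le_a _; rewrite /L_state /= => /and4P[lows ends sorted_s _].
by rewrite has_high_lows // !p_le_a ends.
Qed.

Lemma L_state_cons_stay q a s :
  2 <= q -> a < q - 2 -> L_state q s -> L_state q (a :: s).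
Proof.
case: q => [|[|q]] // _; rewrite /L_state /= !subSS subn0.
move=> lt_aq /and4P[lows ends sorted_s /eqP max_s].
have lt_ap : a < p by rewrite (ltn_trans lt_aq) // -max_s maxs_lt ?ends_in_zero_neq0.
rewrite lt_ap lows ends_in_zero_cons ?ends_in_zero_neq0 // ends max_s leqNgt lt_aq.
by rewrite maxs_cons max_s sorted_s; apply/eqP/maxn_idPr/ltnW.
Qed.

Lemma L_state_cons_top q q' s : 2 <= q < p.+2 ->
  (if q == 2 then q' == 0 else 2 <= q' < q) -> L_state q' s -> L_state q ((q - 2) :: s).
Proof.
case: q => [|[|[|q]]] //= q_lt; rewrite !subSS subn0.
  by move=> /eqP-> /eqP->; rewrite /L_state /= maxs_cons maxs_nil andbT; case: p q_lt.
case: q' => [|[|q']] //=; rewrite !ltnS /L_state /= !subSS subn0 => le_q'q.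
case/and4P=> lows ends sorted_s /eqP max_s.
have lt_qp : q.+1 < p by move: q_lt; rewrite !ltnS.
rewrite lt_qp lows ends_in_zero_cons ?ends_in_zero_neq0 // ends subn0 /=.
rewrite max_s (leqW le_q'q) maxs_cons max_s (maxn_idPl (leqW le_q'q)) eqxx andbT /=.
have /rl_maxima_head[l eq_l] : s != [::] by apply: ends_in_zero_neq0.
by move: sorted_s; rewrite eq_l /= => ->; rewrite andbT max_s ltnS.
Qed.

Lemma acceptsL_state q s : q < p.+2 -> accepts p.+2 transL final0 q s -> L_state q s.
Proof.
elim: s q => [|a s IH] q lt_q /=; first by move=> /eqP->.
case/existsP=> q' /andP[tr /(IH _ (ltn_ord q')) st]; rewrite /transL in tr.
case: (leqP 2 q) tr => [q_ge2|q_lt2] /=.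
  case/orP=> [/andP[lt_a /eqP eq_q']|/andP[/eqP-> tr']].
    by rewrite eq_q' in st; apply: L_state_cons_stay.
  by apply: L_state_cons_top st; rewrite ?q_ge2.
case/andP=> /eqP eq_q /orP[/eqP eq_q'|/andP[p_le_a q'_ge2]]; rewrite eq_q.
  by rewrite eq_q' in st; apply: L_state_cons_loop.
exact: L_state_cons_enter st.
Qed.

Lemma L_state_shape q s : q != 0 -> L_state q s ->
  ends_in_zero (low_suffix p s) && sorted gtn (rl_maxima (low_suffix p s)).
Proof.
rewrite /L_state; case: q => [|[|q]] //= _; first by case/and3P=> _ -> ->.
by case/and4P=> lows ends sorted_s _; rewrite low_suffix_id ?has_high_lows ?ends.
Qed.

End AutomatonL.

Lemma odd_subn_pow2 e n : 0 < e -> 2 ^ e <= n -> odd (n - 2 ^ e) = odd n.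
Proof. by case: e => // e _ le_n; rewrite oddB // oddX /= addbF. Qed.

Lemma subn_pow2_lt e n : n < 2 ^ e.+1 -> n - 2 ^ e < 2 ^ e.
Proof. by rewrite expnS; lia. Qed.

(* The prefix of length n of the Zimin word 0 1 0 2 0 1 0 3 ... over the
   letters < e, for n < 2 ^ e. *)
Fixpoint zimin_prefix (e n : nat) : seq nat :=
  if e is e'.+1 then
    if n < 2 ^ e' then zimin_prefix e' n
    else zimin_prefix e' (2 ^ e').-1 ++ e' :: zimin_prefix e' (n - 2 ^ e')
  else [::].

Lemma zimin_prefix_lt e n : all (gtn e) (zimin_prefix e n).
Proof.
elim: e n => [|e IH] n //=; case: ifP => _; first by apply: sub_all (IH n) => x /= /ltnW.
by rewrite all_cat /= ltnSn /=; apply/andP; split; apply: sub_all (IH _) => x /= /ltnW.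
Qed.

Lemma zimin_prefix_subseq e n :
  n.+1 < 2 ^ e -> subseq (zimin_prefix e n) (zimin_prefix e n.+1).
Proof.
elim: e n => [|e IH] n /=; first by rewrite expn0.
move=> lt_n; case: (ltnP n.+1 (2 ^ e)) => [lt_n1|le_n1]; first by rewrite ltnW // IH.
case: (ltnP n (2 ^ e)) => [lt_n0|le_n0].
  have eq_n : n = (2 ^ e).-1 by move: (expn_gt0 2 e); lia.
  by rewrite {1}eq_n prefix_subseq.
rewrite subSn // cat_subseq //= eqxx IH //; rewrite expnS in lt_n; lia.
Qed.

Lemma zimin_prefix_eq0 e n : n < 2 ^ e -> (zimin_prefix e n == [::]) = (n == 0).
Proof.
elim: e n => [|e IH] n /=; first by rewrite expn0; case: n.
move=> lt_n; case: ifP => [/IH//|ge_n].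
have -> : (n == 0) = false by move: ge_n (expn_gt0 2 e); lia.
by case: (zimin_prefix e _).
Qed.

Lemma zimin_prefix_ends_in_zero e n :
  n < 2 ^ e -> ends_in_zero (zimin_prefix e n) = odd n.
Proof.
elim: e n => [|e IH] n /=; first by rewrite expn0; case: n.
move=> lt_n; case: ifP => [/IH//|/negbT]; rewrite -leqNgt => le_n.
have lt_rest := subn_pow2_lt lt_n.
rewrite /ends_in_zero last_cat /=.
have [eq_n|ne_n] := eqVneq n (2 ^ e).
  move/eqP: (zimin_prefix_eq0 lt_rest); rewrite eq_n subnn eqxx oddX orbF => ->.
  by case: e {IH lt_n le_n lt_rest eq_n}.
have e_gt0 : 0 < e by case: e {IH lt_rest} lt_n le_n ne_n => [|e]; rewrite ?expn0 ?expn1; lia.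
have : zimin_prefix e (n - 2 ^ e) != [::] by rewrite zimin_prefix_eq0 //; lia.
rewrite -(odd_subn_pow2 e_gt0 le_n) -(IH _ lt_rest); by case: (zimin_prefix e _).
Qed.

Lemma zimin_prefix_widen p e n :
  p <= e -> n < 2 ^ p -> zimin_prefix e n = zimin_prefix p n.
Proof.
elim: e => [|e IH] le_pe lt_n; first by move: le_pe; rewrite leqn0 => /eqP->.
case: (leqP p e) => [le_pe'|lt_ep]; last by have -> : p = e.+1 by lia.
by rewrite /= ifT ?IH // (leq_trans lt_n) // leq_exp2l.
Qed.

Section ZiminAcceptedK.
Variable p : nat.
Local Notation acceptsK := (accepts p.+2 (transK p) final0).

Lemma acceptsK_low s : s != [::] -> all (gtn p) s -> ~~ ends_in_zero s -> acceptsK 1 s.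
Proof.
elim: s => [|a s IH] // _ /= /andP[lt_ap lows] ends; apply/existsP.
have [s0|s_ne0] := eqVneq s [::].
  by subst s; exists (Ordinal (isT : 0 < p.+2)); rewrite /transK /= lt_ap; case: a ends {lt_ap}.
exists (Ordinal (isT : 1 < p.+2)); rewrite /transK /= lt_ap IH //.
by case: s s_ne0 ends {IH lows}.
Qed.

Lemma acceptsK_top q q' x r : 2 <= q < p.+2 -> all (gtn (q + p - 2)) x ->
  q' < q -> acceptsK q' r -> acceptsK q (x ++ (q + p - 2) :: r).
Proof.
case/andP=> q_ge2 lt_qp lows lt_q' acc_r.
elim: x lows => [|a x IH] /= => [_|/andP[lt_a lows]]; apply/existsP.
  by exists (Ordinal (ltn_trans lt_q' lt_qp)); rewrite /transK q_ge2 eqxx lt_q' orbT.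
by exists (Ordinal lt_qp); rewrite /transK q_ge2 lt_a eqxx IH.
Qed.

Lemma acceptsK_zimin d n : d <= p -> n < 2 ^ (p + d) -> ~~ odd n ->
  exists2 q, q < d + 2 & acceptsK q (zimin_prefix (p + d) n).
Proof.
elim: d n => [|d IH] n le_dp lt_n even_n.
  rewrite addn0 in lt_n *; have [->|n_gt0] := posnP n.
    by exists 0 => //; move: (zimin_prefix_eq0 (expn_gt0 2 p)); rewrite eqxx => /eqP->.
  exists 1 => //; apply: acceptsK_low; rewrite ?zimin_prefix_lt //.
    by rewrite zimin_prefix_eq0 // -lt0n.
  by rewrite zimin_prefix_ends_in_zero.
rewrite addnS /= in lt_n *; case: ifP => [lt_n'|/negbT]; last rewrite -leqNgt => le_n.
  by have [q lt_q acc] := IH n (ltnW le_dp) lt_n' even_n; exists q => //; lia.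
have even_rest : ~~ odd (n - 2 ^ (p + d)) by rewrite odd_subn_pow2 //; lia.
have [q' lt_q' acc] := IH _ (ltnW le_dp) (subn_pow2_lt lt_n) even_rest.
exists (d + 2); first lia.
have := @acceptsK_top (d + 2) q' (zimin_prefix (p + d) (2 ^ (p + d)).-1).
rewrite (_ : d + 2 + p - 2 = p + d); last lia.
by apply; rewrite ?zimin_prefix_lt //; lia.
Qed.

End ZiminAcceptedK.

Section ZiminAcceptedL.
Variable p : nat.
Local Notation acceptsL := (accepts p.+2 (transL p) final0).

Lemma acceptsL_zero : 0 < p -> acceptsL 2 [:: 0].
Proof. by move=> p_gt0; apply/existsP; exists (Ordinal (isT : 0 < p.+2)). Qed.

Lemma acceptsL_top q q' x r : 3 <= q < p.+2 -> all (gtn (q - 2)) x ->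
  2 <= q' < q -> acceptsL q' r -> acceptsL q (x ++ (q - 2) :: r).
Proof.
case/andP=> q_ge3 lt_qp lows /andP[q'_ge2 lt_q'] acc_r.
have q_ge2 : 2 <= q by apply: ltnW.
elim: x lows => [|a x IH] /= => [_|/andP[lt_a lows]]; apply/existsP.
  exists (Ordinal (ltn_trans lt_q' lt_qp)); rewrite /transL q_ge2 ltnn eqxx /= acc_r.
  by rewrite ifF ?q'_ge2 ?lt_q' //; apply/negbTE; lia.
by exists (Ordinal lt_qp); rewrite /transL q_ge2 lt_a eqxx IH.
Qed.

Lemma acceptsL_zimin_low e n : e <= p -> n < 2 ^ e -> odd n ->
  exists2 i, i < e & acceptsL (i + 2) (zimin_prefix e n).
Proof.
elim: e n => [|e IH] n le_ep lt_n odd_n; first by move: lt_n odd_n; rewrite expn0; case: n.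
rewrite /=; case: ifP => [lt_n'|/negbT]; last rewrite -leqNgt => le_n.
  by have [i lt_i acc] := IH n (ltnW le_ep) lt_n' odd_n; exists i => //; lia.
have [eq_n|ne_n] := eqVneq n (2 ^ e).
  have e0 : e = 0 by move: odd_n; rewrite eq_n oddX orbF => /eqP.
  by subst e; exists 0; rewrite // eq_n; apply: acceptsL_zero.
have e_gt0 : 0 < e by case: e {IH le_ep} lt_n le_n ne_n odd_n => [|e]; rewrite ?expn0 ?expn1; lia.
have odd_rest : odd (n - 2 ^ e) by rewrite odd_subn_pow2.
have [i lt_i acc] := IH _ (ltnW le_ep) (subn_pow2_lt lt_n) odd_rest.
exists e => //; have := @acceptsL_top (e + 2) (i + 2) (zimin_prefix e (2 ^ e).-1).
rewrite (_ : e + 2 - 2 = e); last lia.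
by apply; rewrite ?zimin_prefix_lt //; lia.
Qed.

Lemma acceptsL_cat x r : acceptsL 1 r -> acceptsL 1 (x ++ r).
Proof.
move=> acc_r; elim: x => [|a x IH] //=; apply/existsP.
by exists (Ordinal (isT : 1 < p.+2)); rewrite IH.
Qed.

Lemma acceptsL_enter a q' r :
  p <= a -> 2 <= q' < p.+2 -> acceptsL q' r -> acceptsL 1 (a :: r).
Proof.
move=> le_pa /andP[q'_ge2 lt_q'] acc_r /=; apply/existsP.
by exists (Ordinal lt_q'); rewrite acc_r /transL /= le_pa q'_ge2 orbT.
Qed.

Lemma acceptsL_zimin_high d n : d <= p -> 2 ^ p <= n -> n < 2 ^ (p + d) -> odd n ->
  acceptsL 1 (zimin_prefix (p + d) n).
Proof.
elim: d n => [|d IH] n le_dp le_n lt_n odd_n; first by rewrite addn0 in lt_n; lia.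
rewrite addnS /= in lt_n *; case: ifP => [lt_n'|/negbT]; last rewrite -leqNgt => le_n'.
  exact: IH (ltnW le_dp) le_n lt_n' odd_n.
have lt_rest := subn_pow2_lt lt_n.
have odd_rest : odd (n - 2 ^ (p + d)) by rewrite odd_subn_pow2 //; lia.
apply: acceptsL_cat; case: (leqP (2 ^ p) (n - 2 ^ (p + d))) => [le_rest|lt_rest'].
  exact: (acceptsL_cat [:: p + d] (IH _ (ltnW le_dp) le_rest lt_rest odd_rest)).
rewrite (zimin_prefix_widen (leq_addr d p) lt_rest').
have [i lt_i acc] := acceptsL_zimin_low (leqnn p) lt_rest' odd_rest.
by apply: (acceptsL_enter (q' := i + 2)) => //; lia.
Qed.

End ZiminAcceptedL.

Lemma infinite_tower_alternates (T : eqType) (K L : pred (seq T)) w :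
  is_infinite_tower K L w ->
  exists s, (forall k, K (w (s + k.*2))) /\ (forall k, L (w (s + k.*2.+1))).
Proof.
case=> start step.
have from_K i : K (w i) -> forall k, K (w (i + k.*2)) /\ L (w (i + k.*2.+1)).
  move=> Ki; elim=> [|k [_ IHL]]; rewrite ?addn0 ?addn1.
    by split=> //; case: (step i) => _ /(_ Ki).
  have Ki' : K (w (i + k.+1.*2)).
    by rewrite doubleS addnS; case: (step (i + k.*2.+1)) => _ _ /(_ IHL).
  by split=> //; rewrite addnS; case: (step (i + k.+1.*2)) => _ /(_ Ki').
case/orP: start => [/from_K all_K|L0]; first by exists 0; split=> k; case: (all_K k).
have /from_K all_K : K (w 1) by case: (step 0) => _ _ /(_ L0).
by exists 1; split=> k; case: (all_K k).
Qed.

Section Construction.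
Variable p : nat.
Local Notation k := (2 * p.+1).

Definition nfaK : nfa p.+2 k := @nfa_of p.+2 (transK p) final0 k predT.
Definition nfaL : nfa p.+2 k := @nfa_of p.+2 (transL p) final0 k (fun q => q != 0).

Lemma all_val_lt (w : seq 'I_k) : all (gtn k) (map val w).
Proof. by apply/allP => _ /mapP[a _ ->]; apply: ltn_ord. Qed.

Lemma nfaK_shaped w : nfa_lang nfaK w -> K_shaped p k (map val w).
Proof.
rewrite nfa_of_lang => /existsP[q /andP[_ /acceptsK_state /K_state_shape]].
by rewrite /K_shaped all_val_lt andbT.
Qed.

Lemma nfaL_shaped w : nfa_lang nfaL w -> L_shaped p k (map val w).
Proof.
rewrite nfa_of_lang => /existsP[q /andP[q_ne0 /(acceptsL_state (ltn_ord q))]].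
by move/(L_state_shape q_ne0); rewrite /L_shaped all_val_lt andbT.
Qed.

Lemma nfaK_nfaL_disjoint w : nfa_lang nfaK w -> nfa_lang nfaL w -> False.
Proof. by move=> /nfaK_shaped/and3P[_ + _] /nfaL_shaped/and3P[+ _ _] => /negP. Qed.

Definition word_of (s : seq nat) : seq 'I_k :=
  map (insubd (Ordinal (muln_gt0 2 p.+1 : 0 < k))) s.

Lemma val_word_of s : all (gtn k) s -> map val (word_of s) = s.
Proof. by elim: s => [|x s IH] //= /andP[lt_x /IH->]; rewrite val_insubd lt_x. Qed.

Definition zimin_word n := word_of (zimin_prefix (p + p) n).

Lemma zimin_word_accepted n : n < 2 ^ (p + p) ->
  nfa_lang (if odd n then nfaL else nfaK) (zimin_word n).
Proof.
move=> lt_n; have lows : all (gtn k) (zimin_prefix (p + p) n).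
  by apply: sub_all (zimin_prefix_lt _ _) => x /= lt_x; lia.
case: ifP => [odd_n|/negbT even_n]; rewrite nfa_of_lang val_word_of //; apply/existsP.
  have [lt_np|le_pn] := ltnP n (2 ^ p); last first.
    by exists (Ordinal (isT : 1 < p.+2)); rewrite acceptsL_zimin_high.
  rewrite (zimin_prefix_widen (leq_addr p p) lt_np).
  have [i lt_i acc] := acceptsL_zimin_low (leqnn p) lt_np odd_n.
  have lt_i2 : i + 2 < p.+2 by lia.
  by exists (Ordinal lt_i2); rewrite /= acc andbT addn2.
have [q lt_q acc] := acceptsK_zimin (leqnn p) lt_n even_n.
have lt_q2 : q < p.+2 by lia.
by exists (Ordinal lt_q2).
Qed.

Definition zimin_tower := [seq zimin_word n | n <- iota 0 (2 ^ (p + p))].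

Lemma size_zimin_tower : size zimin_tower = 2 ^ (p + p).
Proof. by rewrite size_map size_iota. Qed.

Lemma nth_zimin_tower i : i < 2 ^ (p + p) -> nth [::] zimin_tower i = zimin_word i.
Proof. by move=> lt_i; rewrite (nth_map 0) ?size_iota // nth_iota. Qed.

Lemma is_tower_zimin : is_tower (nfa_lang nfaK) (nfa_lang nfaL) zimin_tower.
Proof.
have tower_gt0 : 0 < 2 ^ (p + p) by rewrite expn_gt0.
split; first by rewrite size_zimin_tower.
split; first by rewrite nth_zimin_tower // (zimin_word_accepted tower_gt0).
move=> i; rewrite size_zimin_tower => lt_i1; have lt_i := ltnW lt_i1.
have acc_i := zimin_word_accepted lt_i; have acc_i1 := zimin_word_accepted lt_i1.
have sub_i : subseq (zimin_word i) (zimin_word i.+1) by apply/map_subseq/zimin_prefix_subseq.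
rewrite !nth_zimin_tower //.
have [odd_i|even_i] := boolP (odd i); rewrite /= ?odd_i ?(negbTE even_i) /= in acc_i acc_i1.
  by split=> // Ki; case: (nfaK_nfaL_disjoint Ki acc_i).
by split=> // Li; case: (nfaK_nfaL_disjoint acc_i Li).
Qed.

Lemma no_infinite_tower_zimin :
  ~ exists w, is_infinite_tower (nfa_lang nfaK) (nfa_lang nfaL) w.
Proof.
case=> w /[dup] /infinite_tower_alternates[s [all_K all_L]] [_ step].
apply: (@no_alternating_chain p k (fun i => map val (w (s + i)))).
- by move=> i; rewrite addnS; apply/map_subseq; case: (step (s + i)).
- by move=> j; apply: nfaK_shaped.
- by move=> j; apply: nfaL_shaped.
Qed.

End Construction.

From Stdlib Require Import Reals Lra.

Lemma INR_expn m e : INR (expn m e) = (INR m ^ e)%R.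
Proof. by elim: e => [|e IH]; rewrite ?expn0 // expnS -multE mult_INR IH. Qed.

Theorem theorem10 :
  exists c : R, (0 < c)%R /\
    forall m : nat, 1 <= m ->
      exists (A B : nfa m.+1 (2 * m)),
        (exists ws : seq (seq 'I_(2 * m)),
            is_tower (nfa_lang A) (nfa_lang B) ws /\
            (c * 2 ^ (2 * m) <= INR (size ws))%R) /\
        ~ (exists w : nat -> seq 'I_(2 * m),
              is_infinite_tower (nfa_lang A) (nfa_lang B) w).
Proof.
exists (1 / 4)%R; split; first lra.
case=> [//|p] _; exists (nfaK p), (nfaL p); split; last exact: no_infinite_tower_zimin.
exists (zimin_tower p); split; first exact: is_tower_zimin.
rewrite size_zimin_tower INR_expn (_ : INR 2 = 2%R); last by rewrite /=; lra.
rewrite (_ : muln 2 p.+1 = addn (addn p p) 2) ?pow_add /=; [lra | lia].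
Qed.
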